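(* Let $\mathcal{X}$ be a set, let the side-information sets be constant, $\mathcal{X}_1=\mathcal{X}_2=\cdots=\mathcal{X}$ (independent of the history), and let $\mathcal{F}$ be a class of functions $\mathcal{X}\to[0,1]$. Then the following are equivalent: (i) the minimax regret is sublinear, i.e. $\frac1nV_n(\mathcal{F})\to0$ as $n\to\infty$; (ii) the sequential dimension $\mathrm{fat}_\beta(\mathcal{F},\mathcal{X})$ is finite for every $\beta>0$.
   Context: Logarithmic loss: $\ell(\hat y,y)=-\mathbf{1}\{y=1\}\log\hat y-\mathbf{1}\{y=0\}\log(1-\hat y)$. Minimax regret (with constant side-information set $\mathcal{X}$): $$V_n(\mathcal{F})=\sup_{x_1\in\mathcal{X}}\inf_{\hat y_1\in[0,1]}\sup_{p_1\in[0,1]}\mathbb{E}_{y_1\sim p_1}\cdots\sup_{x_n\in\mathcal{X}}\inf_{\hat y_n\in[0,1]}\sup_{p_n\in[0,1]}\mathbb{E}_{y_n\sim p_n}\Big[\sum_{t=1}^n\ell(\hat y_t,y_t)-\inf_{f\in\mathcal{F}}\sum_{t=1}^n\ell(f(x_t),y_t)\Big],$$ where $y_t\sim p_t$ is Bernoulli with $P(y_t=1)=p_t$. An $\mathcal{X}$-valued tree of depth $d$ is a sequence of maps $\mathbf{x}_t:\{0,1\}^{t-1}\to\mathcal{X}$, $t=1,\dots,d$, with $\mathbf{x}_t(y)=\mathbf{x}_t(y_1,\dots,y_{t-1})$. $\mathcal{F}$ shatters at scale $\beta>0$ an $\mathcal{X}$-valued tree $\mathbf{x}$ of depth $d$ if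 there is an $\mathbb{R}$-valued witness tree $\mathbf{s}$ of depth $d$ such that for every $y\in\{0,1\}^d$ there is $f\in\mathcal{F}$ with $(2y_t-1)(f(\mathbf{x}_t(y))-\mathbf{s}_t(y))\ge\beta/2$ for all $t=1,\dots,d$. The sequential fat-shattering dimension $\mathrm{fat}_\beta(\mathcal{F},\mathcal{X})$ is the largest depth of an $\mathcal{X}$-valued tree shattered by $\mathcal{F}$ at scale $\beta$. *)

From HB Require Import structures.
From mathcomp Require Import all_boot all_order all_algebra.
From mathcomp Require Import all_classical all_reals all_analysis.
Set Implicit Arguments. Unset Strict Implicit. Unset Printing Implicit Defensive.
Import Order.TTheory GRing.Theory Num.Theory.
Import numFieldNormedType.Exports.
Local Open Scope classical_set_scope.
Local Open Scope ring_scope.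

Section Defs.
Variables (R : realType) (X : Type).

Definition logloss (yhat : R) (y : bool) : \bar R :=
  if y then (if yhat == 0 then +oo%E else (- ln yhat)%:E)
  else (if yhat == 1 then +oo%E else (- ln (1 - yhat))%:E).

(* A history is the sequence of rounds (x_t, yhat_t, y_t). *)
Definition history := seq ((X * R) * bool).

Definition regret (F : set (X -> R)) (h : history) : \bar R :=
  let player := (\sum_(e <- h) logloss e.1.2 e.2)%E in
  let comp := ereal_inf [set (\sum_(e <- h) logloss (f e.1.1) e.2)%E | f in F] in
  if player == +oo%E then +oo%E else (player - comp)%E.

Fixpoint game_value (F : set (X -> R)) (k : nat) (h : history) : \bar R :=
  match k with
  | 0 => regret F h
  | k'.+1 =>
    ereal_sup [set
      ereal_inf [set
        ereal_sup [set
          (p%:E * game_value F k' (rcons h ((x, yhat), true))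
           + (1 - p)%:E * game_value F k' (rcons h ((x, yhat), false)))%E
          | p in `[0, 1]%classic]
        | yhat in `[0, 1]%classic]
      | x in [set: X]]
  end.

Definition minimax_regret (F : set (X -> R)) (n : nat) : \bar R :=
  game_value F n [::].

(* An X-valued (resp. R-valued) tree of depth d is represented by a map on
   binary prefixes: x_t(y_1..y_{t-1}) = x (take (t-1) y).  Only prefixes of
   length < d are relevant. *)
Definition shatters (F : set (X -> R)) (beta : R) (d : nat)
    (x : seq bool -> X) : Prop :=
  exists s : seq bool -> R,
    forall y : seq bool, size y = d ->
      exists f, F f /\
        forall t : nat, (t < d)%N ->
          beta / 2 <= (2 * ((nth false y t : nat)%:R) - 1)
                       * (f (x (take t y)) - s (take t y)).

Definition seq_fat (F : set (X -> R)) (beta : R) : \bar R :=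
  ereal_sup [set (d%:R)%:E | d in [set d : nat | exists x, shatters F beta d x]].

End Defs.

From HB Require Import structures.
From mathcomp Require Import all_boot all_order all_algebra.
From mathcomp Require Import all_classical all_reals all_analysis.
From mathcomp Require Import lra ring zify.
Set Implicit Arguments. Unset Strict Implicit. Unset Printing Implicit Defensive.
Import Order.TTheory GRing.Theory Num.Theory.
Import numFieldNormedType.Exports.
Local Open Scope classical_set_scope.
Local Open Scope ring_scope.

(* Lower bound: along a tree shattered at scale [beta], the adversary reveals
   at every node the outcome on the far side of the witness from the
   learner's prediction.  Some [f] in [F] follows the whole branch with
   margin [beta / 2], so the learner loses [ln (1 + beta / 2)] more than [f]
   in every round, and [V_n >= n ln (1 + beta / 2)].

   Upper bound: discretise [0, 1] with step [1 / K] and measure a class by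
   its rank, one more than its sequential fat-shattering dimension at scale
   [2 / K].  A rank-based Standard Optimal Algorithm predicts the largest
   grid point above which the class keeps its rank; whenever a target [f] is
   [2 / K] away from this prediction, restricting the class to [f]'s side
   lowers the rank, so this happens at most [d = fat_(2/K)] times.  An expert
   guesses these at most [d] rounds and sides, and the Bayes mixture of the
   [eps]-smoothed SOA predictions of the [(2n + 3)^(d + 1)] experts has
   regret at most [(d + 1) ln (2n + 3) + n ln (1 / (1 - 2 eps)) + d ln (1 / eps)],
   which is [o(n)] once [eps] and then [K] are chosen from the target rate. *)

Definition likelihood (R : pzRingType) (yhat : R) (y : bool) : R :=
  if y then yhat else 1 - yhat.

Lemma logloss_likelihood (R : realType) (yhat : R) y : 0 < yhat < 1 ->
  logloss yhat y = (- ln (likelihood yhat y))%:E.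
Proof.
by case/andP=> y0 y1; rewrite /logloss /likelihood; case: y; [rewrite gt_eqF | rewrite lt_eqF].
Qed.

Lemma logloss_ge0 (R : realType) (v : R) y : 0 <= v <= 1 -> (0 <= logloss v y)%E.
Proof.
case/andP=> v0 v1; rewrite /logloss; case: y; case: eqP => // _;
  rewrite lee_fin oppr_ge0 ln_le0 //; lra.
Qed.

(* The outcome [yhat <= s] is the side of the witness [s] away from [yhat];
   [v] lies on that side with margin [b / 2]. *)
Lemma logloss_margin (R : realType) (b yhat v s : R) : 0 <= b ->
  0 <= yhat <= 1 -> 0 <= v <= 1 ->
  b / 2 <= (2 * (((yhat <= s)%R : nat)%:R) - 1) * (v - s) ->
  ((ln (1 + b / 2))%:E + logloss v (yhat <= s)%R <= logloss yhat (yhat <= s)%R)%E.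
Proof.
move=> b0 /andP[yh0 yh1] /andP[v0 v1]; rewrite /logloss.
have bp : 0 < 1 + b / 2 by lra.
case: (leP yhat s) => [ys|sy] /=; [rewrite mulr1n | rewrite mulr0n] => H.
- case: (boolP (yhat == 0)) => [_|yhn0]; first by rewrite leey.
  have yhp : 0 < yhat by rewrite lt_neqAle eq_sym yhn0.
  rewrite gt_eqF -?EFinD ?lee_fin; last by lra.
  suff : ln yhat + ln (1 + b / 2) <= ln v by lra.
  rewrite -lnM ?posrE // ler_ln ?posrE ?mulr_gt0 //; nra.
- case: (boolP (yhat == 1)) => [_|yhn1]; first by rewrite leey.
  have yhp : 0 < 1 - yhat by rewrite subr_gt0 lt_neqAle yhn1.
  rewrite lt_eqF -?EFinD ?lee_fin; last by lra.
  suff : ln (1 - yhat) + ln (1 + b / 2) <= ln (1 - v) by lra.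
  rewrite -lnM ?posrE // ler_ln ?posrE ?mulr_gt0 //; nra.
Qed.

Lemma lee_conv_comb (R : realType) (p : R) (a b : \bar R) (B : R) : 0 <= p <= 1 ->
  (a <= B%:E)%E -> (b <= B%:E)%E -> (p%:E * a + (1 - p)%:E * b <= B%:E)%E.
Proof.
case/andP=> p0 p1 aB bB.
apply: (@le_trans _ _ (p%:E * B%:E + (1 - p)%:E * B%:E)%E).
  by apply: leeD; apply: lee_wpmul2l => //; rewrite lee_fin ?subr_ge0.
by rewrite -!EFinM -EFinD lee_fin; lra.
Qed.

Section Game.
Variables (R : realType) (X : Type) (F : set (X -> R)).
Local Notation entry := ((X * R) * bool)%type.
Local Notation hist := (history R X).

Definition each_round (P : hist -> entry -> Prop) (h : hist) :=
  forall h1 e h2, h = h1 ++ e :: h2 -> P h1 e.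

Lemma each_round_nil P : each_round P [::].
Proof. by move=> [|? ?] ? ?. Qed.

Lemma each_round_rcons P h e : each_round P (rcons h e) <-> each_round P h /\ P h e.
Proof.
split.
  move=> H; split; last by apply: (H h e [::]); rewrite cats1.
  by move=> h1 e' h2 hE; apply: (H h1 e' (rcons h2 e)); rewrite hE rcons_cat.
case=> H He h1 e' h2; case/lastP: h2 => [|h2 z].
  by rewrite cats1 => /rcons_inj [<- <-].
by rewrite -rcons_cons -rcons_cat => /rcons_inj [/H].
Qed.

Lemma lee_sum_rounds (h : hist) (G H : entry -> \bar R) :
  each_round (fun _ e => G e <= H e)%E h ->
  (\sum_(e <- h) G e <= \sum_(e <- h) H e)%E.
Proof.
elim: h => [|e h IH] Hh; first by rewrite !big_nil.
rewrite !big_cons; apply: leeD; first exact: (Hh [::] e h).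
by apply: IH => h1 e' h2 hE; apply: (Hh (e :: h1) e' h2); rewrite hE.
Qed.

Lemma game_value_le_strategy (sigma : hist -> X -> R) (B : R) k h :
  (forall h x, 0 <= sigma h x <= 1) ->
  each_round (fun h1 e => e.1.2 = sigma h1 e.1.1) h ->
  (forall h', size h' = k -> each_round (fun h1 e => e.1.2 = sigma h1 e.1.1) (h ++ h') ->
     (regret F (h ++ h') <= B%:E)%E) ->
  (game_value F k h <= B%:E)%E.
Proof.
move=> sigma01; elim: k h => [|k IH] h hh H /=.
  by have := H [::] erefl; rewrite cats0; apply.
apply: ge_ereal_sup => _ [x _ <-].
apply: le_trans; first by apply: ereal_inf_lbound; exists (sigma h x);
  rewrite //= in_itv /=; apply: sigma01.
apply: ge_ereal_sup => _ [p /= p01 <-].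
have Hy y : (game_value F k (rcons h (x, sigma h x, y)) <= B%:E)%E.
  apply: IH; first exact/each_round_rcons.
  move=> h' sz hh'; rewrite cat_rcons; apply: H; first by rewrite /= sz.
  by rewrite -cat_rcons.
by apply: lee_conv_comb; rewrite ?Hy //; move: p01; rewrite in_itv.
Qed.

Lemma game_value_ge_strategy (alpha : hist -> X) (outcome : hist -> R -> bool)
    (B : \bar R) k h :
  let follows h1 e := [/\ e.1.1 = alpha h1, e.2 = outcome h1 e.1.2 & 0 <= e.1.2 <= 1] in
  each_round follows h ->
  (forall h', size h' = k -> each_round follows (h ++ h') -> (B <= regret F (h ++ h'))%E) ->
  (B <= game_value F k h)%E.
Proof.
move=> follows; elim: k h => [|k IH] h hh H /=.
  by have := H [::] erefl; rewrite cats0; apply.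
apply: le_trans; last by apply: ereal_sup_ubound; exists (alpha h).
apply: le_ereal_inf_tmp => _ [yh /= yh01 <-]; move: yh01; rewrite in_itv /= => yh01.
apply: le_trans; last first.
  apply: ereal_sup_ubound; exists (if outcome h yh then 1 else 0) => //=.
  by rewrite in_itv /=; case: (outcome h yh); rewrite ?lexx ?ler01.
have Hy : (B <= game_value F k (rcons h (alpha h, yh, outcome h yh)))%E.
  apply: IH; first exact/each_round_rcons.
  move=> h' sz hh'; rewrite cat_rcons; apply: H; first by rewrite /= sz.
  by rewrite -cat_rcons.
case: (outcome h yh) Hy => Hy /=.
  by rewrite subrr mul0e adde0 mul1e.
by rewrite mul0e add0e subr0 mul1e.
Qed.

Definition cum_loss (f : X -> R) (h : hist) := (\sum_(e <- h) logloss (f e.1.1) e.2)%E.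
Definition learner_loss (h : hist) := (\sum_(e <- h) logloss e.1.2 e.2)%E.

Lemma regret_le (h : hist) (L B : R) : learner_loss h = L%:E ->
  (forall f, F f -> ((L - B)%:E <= cum_loss f h)%E) -> (regret F h <= B%:E)%E.
Proof.
move=> hL Hf; rewrite /regret -/(learner_loss h) hL /=.
have : ((L - B)%:E <= ereal_inf [set cum_loss f h | f in F])%E.
  by apply: le_ereal_inf_tmp => _ [f Ff <-]; apply: Hf.
rewrite /cum_loss; case: (ereal_inf _) => [c| |] //=; last by rewrite leNye.
by rewrite !lee_fin => ?; lra.
Qed.

Hypothesis F01 : forall f, F f -> forall x, 0 <= f x <= 1.

Lemma regret_ge (h : hist) (B : R) f : F f ->
  each_round (fun _ e => 0 <= e.1.2 <= 1) h ->
  (B%:E + cum_loss f h <= learner_loss h)%E -> (B%:E <= regret F h)%E.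
Proof.
move=> Ff h01 HB.
have loss_ge0 g : F g -> (0 <= cum_loss g h)%E.
  by move=> Fg; apply: sume_ge0 => e _; apply/logloss_ge0/F01.
have L0 : (0 <= learner_loss h)%E.
  have := @lee_sum_rounds h (fun=> 0%E) (fun e => logloss e.1.2 e.2).
  rewrite big1 // => -> // h1 e h2 hE; exact/logloss_ge0/(h01 _ _ _ hE).
have inf_le : (ereal_inf [set cum_loss g h | g in F] <= cum_loss f h)%E.
  by apply: ereal_inf_lbound; exists f.
have inf_ge0 : (0 <= ereal_inf [set cum_loss g h | g in F])%E.
  by apply: le_ereal_inf_tmp => _ [g Fg <-]; apply: loss_ge0.
rewrite /regret -/(learner_loss h); case: ifP => [_|/eqP Lfin]; first by rewrite leey.
move: HB inf_le inf_ge0 (loss_ge0 f Ff) L0 Lfin; rewrite /cum_loss.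
case: (learner_loss h) => [p| |] //; case: (ereal_inf _) => [c| |] //;
  case: (\sum_(e <- h) _)%E => [l| |] //=; rewrite ?lee_fin => *; lra.
Qed.

End Game.

Section Shattering.
Variables (R : realType) (X : Type).
Implicit Types (V W : set (X -> R)) (b : R).

Definition above V x r := [set g | V g /\ r <= g x].
Definition below V x r := [set g | V g /\ g x <= r].

Lemma shatters_sub V W b d x : V `<=` W -> shatters V b d x -> shatters W b d x.
Proof.
move=> VW [s Hs]; exists s => y sy; have [f [Vf Hf]] := Hs y sy.
by exists f; split => //; apply: VW.
Qed.

Lemma shatters_shallower V b d m x : (m <= d)%N -> shatters V b d x -> shatters V b m x.
Proof.
move=> md [s Hs]; exists s => y sy.
have [|f [Vf Hf]] := Hs (y ++ nseq (d - m) false).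
  by rewrite size_cat size_nseq sy subnKC.
exists f; split => // t tm; have := Hf t (leq_trans tm md).
by rewrite nth_cat sy tm takel_cat // sy ltnW.
Qed.

(* The witness at the new root is [r]: the two halves of [V] separated by
   the gap [b] around [r] at [x0] shatter the left and right subtrees. *)
Lemma shatters_join V b m (x0 : X) (r : R) x1 x2 :
  shatters (above V x0 (r + b / 2)) b m x1 ->
  shatters (below V x0 (r - b / 2)) b m x2 ->
  shatters V b m.+1 (fun y => if y is c :: y' then (if c then x1 y' else x2 y') else x0).
Proof.
move=> [s1 H1] [s2 H2].
exists (fun y => if y is c :: y' then (if c then s1 y' else s2 y') else r).
case=> [//|[] y] /= [sy].
  have [f [[Vf fr] Hf]] := H1 y sy; exists f; split => //.
  case=> [_|t] /=; last by rewrite ltnS; apply: Hf.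
  by rewrite mulr1n; lra.
have [f [[Vf fr] Hf]] := H2 y sy; exists f; split => //.
case=> [_|t] /=; last by rewrite ltnS; apply: Hf.
by rewrite mulr0 sub0r mulN1r; lra.
Qed.

Lemma seq_fat_lt_bounded (F : set (X -> R)) b : (seq_fat F b < +oo)%E ->
  exists d, forall m x, shatters F b m x -> (m <= d)%N.
Proof.
rewrite /seq_fat; set S := ereal_sup _ => Sfin.
have ub m x : shatters F b m x -> ((m%:R)%:E <= S)%E.
  by move=> hs; apply: ereal_sup_ubound; exists m => //; exists x.
move: Sfin ub; case: S => [r| |] // _ ub; last first.
  by exists 0%N => m x /ub; rewrite leeNy_eq.
exists (Num.Def.archi_bound `|r|) => m x /ub; rewrite lee_fin => mr.
rewrite -(ler_nat R) ltW // (le_lt_trans mr) // (le_lt_trans (ler_norm r)) //.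
exact: archi_boundP.
Qed.

Lemma seq_fat_not_lt_shatters (F : set (X -> R)) b : ~ (seq_fat F b < +oo)%E ->
  forall n, exists x, shatters F b n x.
Proof.
move=> Hinf n; apply: contrapT => Hn; apply: Hinf.
apply: (@le_lt_trans _ _ (n%:R)%:E); last exact: ltry.
apply: ge_ereal_sup => _ [m [x hs] <-]; rewrite lee_fin ler_nat leqNgt.
by apply/negP => nm; apply: Hn; exists x; apply: shatters_shallower hs; apply: ltnW.
Qed.

End Shattering.

Lemma sum_cst_adde (R : realType) (T : Type) (s : seq T) (c : R) (G : T -> \bar R) :
  (\sum_(e <- s) (c%:E + G e) = ((size s)%:R * c)%:E + \sum_(e <- s) G e)%E.
Proof.
elim: s => [|e s IH]; first by rewrite !big_nil mul0r add0e.
rewrite !big_cons IH addeACA -EFinD; congr (_%:E + _)%E.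
by rewrite /= -natr1 mulrDl mul1r addrC.
Qed.

Section LowerBound.
Variables (R : realType) (X : Type) (F : set (X -> R)).
Hypothesis F01 : forall f, F f -> forall x, 0 <= f x <= 1.

Lemma minimax_regret_ge_shatters b n x : 0 <= b -> shatters F b n x ->
  ((n%:R * ln (1 + b / 2))%:E <= minimax_regret F n)%E.
Proof.
move=> b0 [s Hs]; pose outs (h : history R X) := [seq e.2 | e <- h].
apply: (@game_value_ge_strategy _ _ _ (x \o outs) (fun h yh => yh <= s (outs h))).
  exact: each_round_nil.
move=> h sz /= hh; have /Hs [f [Ff Hf]] : size (outs h) = n by rewrite size_map.
apply: (@regret_ge _ _ F F01 _ _ f Ff); first by move=> h1 e h2 /hh [].
rewrite /cum_loss /learner_loss -sz -sum_cst_adde; apply: lee_sum_rounds => h1 e h2 hE.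
have [ex ey e01] := hh h1 e h2 hE.
have /Hf : (size h1 < n)%N by rewrite -sz hE size_cat /= addnS ltnS leq_addr.
rewrite /outs hE map_cat take_size_cat ?size_map // nth_cat size_map ltnn subnn /=.
by rewrite -ex ey => H; apply: logloss_margin => //; apply: F01.
Qed.

Lemma minimax_regret_ge0 n : inhabited X -> F !=set0 -> (0 <= minimax_regret F n)%E.
Proof.
case=> x0 [f0 Ff0].
have shatters0 : shatters F 0 n (fun _ => x0).
  by exists (fun _ => f0 x0) => y _; exists f0; split => // t _; rewrite mul0r subrr mulr0.
by have := minimax_regret_ge_shatters (lexx 0) shatters0; rewrite mul0r addr0 ln1 mulr0.
Qed.

End LowerBound.

Lemma likelihood_bounds (R : realFieldType) (eps p : R) y :
  eps <= p <= 1 - eps -> eps <= likelihood p y <= 1 - eps.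
Proof. by rewrite /likelihood; case: y => // /andP[h1 h2]; apply/andP; split; lra. Qed.

Lemma logloss_ge_far (R : realType) (eps p v : R) y : 0 < eps ->
  eps <= p <= 1 - eps -> 0 <= v <= 1 ->
  ((- ln (likelihood p y) + ln eps)%:E <= logloss v y)%E.
Proof.
move=> eps0 hp hv; apply: le_trans (logloss_ge0 y hv); rewrite lee_fin.
have /andP[p0 _] := likelihood_bounds y hp.
suff : ln eps <= ln (likelihood p y) by lra.
by rewrite ler_ln ?posrE //; lra.
Qed.

Lemma logloss_ge_smoothed (R : realType) (eps yh v : R) y : 0 < eps -> 4 * eps <= 1 ->
  0 <= yh <= 1 -> 0 <= v <= 1 -> yh - eps < v < yh + eps ->
  ((- ln (likelihood (eps + (1 - 2 * eps) * yh) y) + ln (1 - 2 * eps))%:E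
   <= logloss v y)%E.
Proof.
move=> eps0 eps1 /andP[y0 y1] /andP[v0 v1] /andP[vl vu].
have e2 : 0 < 1 - 2 * eps by lra.
have t1 : (1 - 2 * eps) * (v - yh) <= eps by case: (lerP (v - yh) 0); nra.
have t2 : (1 - 2 * eps) * (yh - v) <= eps by case: (lerP (yh - v) 0); nra.
have ep : 0 < eps + (1 - 2 * eps) * yh by nra.
have ep' : 0 < 1 - (eps + (1 - 2 * eps) * yh) by nra.
rewrite /logloss /likelihood; case: y.
  case: ifP => [_|/negbT vn0]; first by rewrite leey.
  have vp : 0 < v by rewrite lt_neqAle eq_sym vn0.
  rewrite lee_fin; suff : ln v + ln (1 - 2 * eps) <= ln (eps + (1 - 2 * eps) * yh) by lra.
  rewrite -lnM ?posrE // ler_ln ?posrE ?mulr_gt0 //; nra.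
case: ifP => [_|/negbT vn1]; first by rewrite leey.
have vp : 0 < 1 - v by rewrite subr_gt0 lt_neqAle vn1.
rewrite lee_fin; suff : ln (1 - v) + ln (1 - 2 * eps) <= ln (1 - (eps + (1 - 2 * eps) * yh)) by lra.
rewrite -lnM ?posrE // ler_ln ?posrE ?mulr_gt0 //; nra.
Qed.

Section VersionSpace.
Variables (R : realType) (X : Type) (F : set (X -> R)) (x0 : X) (K d : nat).
Hypothesis K_gt0 : (0 < K)%N.
Local Notation b := (2 / K%:R : R).
Hypothesis F_depth : forall m x, shatters F b m x -> (m <= d)%N.

Let K_gtr0 : 0 < K%:R :> R. Proof. by rewrite ltr0n. Qed.
Let b_gt0 : 0 < b. Proof. by rewrite divr_gt0. Qed.

Definition shattered (V : set (X -> R)) m := exists x, shatters V b m x.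

(* One more than the largest depth shattered by [V] at scale [b]; the search
   stops at [d.+2], which subclasses of [F] never reach. *)
Definition rank V := find (fun m => ~~ `[< shattered V m >]) (iota 0 d.+2).

Lemma rank_lt V : V `<=` F -> (rank V < d.+2)%N.
Proof.
move=> VF; rewrite /rank -[X in (_ < X)%N](size_iota 0 d.+2) -has_find.
apply/hasP; exists d.+1; first by rewrite mem_iota add0n leq0n ltnSn.
by apply/negP => /asboolP [x /(shatters_sub VF) /F_depth]; rewrite ltnn.
Qed.

Lemma shatteredE V m : V `<=` F -> shattered V m <-> (m < rank V)%N.
Proof.
move=> VF; split.
  case=> x hs; rewrite ltnNge; apply/negP => rank_le.
  have := @nth_find _ 0%N (fun m => ~~ `[< shattered V m >]) (iota 0 d.+2).
  rewrite has_find size_iota rank_lt // nth_iota ?rank_lt // add0n => /(_ isT) /negP.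
  by apply; apply/asboolP; exists x; apply: shatters_shallower hs.
move=> m_lt; have := before_find 0%N m_lt.
by rewrite nth_iota ?add0n => [/negbFE /asboolP|]; last exact: ltn_trans m_lt (rank_lt VF).
Qed.

Lemma rank_gt0 V f : V `<=` F -> V f -> (0 < rank V)%N.
Proof.
move=> VF Vf; apply/(shatteredE 0 VF); exists (fun _ => x0).
by exists (fun _ => 0) => y _; exists f.
Qed.

Definition keeps_rank V x (j : nat) : bool :=
  (rank V <= rank (above V x (j%:R / K%:R + b / 2)%R))%N.

(* A discretised Standard Optimal Algorithm: predict the largest grid point
   [j / K] above which [V] keeps full rank. *)
Definition soa_index V x : nat := \big[maxn/0%N]_(j < K.+1 | keeps_rank V x j) (j : nat).
Definition soa V x : R := (soa_index V x)%:R / K%:R.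

Lemma soa_index_le V x : (soa_index V x <= K)%N.
Proof. by apply/bigmax_leqP => i _; rewrite -ltnS. Qed.

Lemma soa01 V x : 0 <= soa V x <= 1.
Proof. by rewrite divr_ge0 //= ler_pdivrMr // mul1r ler_nat soa_index_le. Qed.

Lemma rank_above_soa V x : V `<=` F -> soa V x + b <= 1 ->
  (rank (above V x (soa V x + b)%R) < rank V)%N.
Proof.
move=> VF soa_b; have j_lt : (soa_index V x < K)%N.
  have : soa V x < 1 by have := b_gt0; lra.
  by rewrite /soa ltr_pdivrMr // mul1r ltr_nat.
rewrite ltnNge; apply/negP => keeps.
have : keeps_rank V x (soa_index V x).+1.
  rewrite /keeps_rank (_ : _ + b / 2 = soa V x + b) //.
  by rewrite /soa -natr1; field; rewrite pnatr_eq0 -lt0n.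
pose j : 'I_K.+1 := @Ordinal K.+1 (soa_index V x).+1 j_lt.
move/(@leq_bigmax_cond _ (fun j : 'I_K.+1 => keeps_rank V x j) val j).
by rewrite -/(soa_index V x) ltnn.
Qed.

(* If both sides of [soa V x] kept full rank, joining their trees at [x]
   would shatter depth [rank V]. *)
Lemma rank_below_soa V x g : V `<=` F -> V g -> 0 < soa V x ->
  (rank (below V x (soa V x - b / 2)%R) < rank V)%N.
Proof.
move=> VF Vg soa_gt0.
have [j0 keeps_j0] : exists j : 'I_K.+1, keeps_rank V x j.
  apply/existsP; apply: contraTT soa_gt0; rewrite negb_exists => /forallP none.
  suff : soa_index V x = 0%N by rewrite /soa => ->; rewrite mul0r ltxx.
  by apply/eqP; rewrite -leqn0; apply/bigmax_leqP => i; rewrite (negPf (none i)).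
have keeps : keeps_rank V x (soa_index V x).
  by rewrite /soa_index (bigop.bigmax_eq_arg j0) //; case: arg_maxnP.
rewrite ltnNge; apply/negP => below_full.
have rank_pos := rank_gt0 VF Vg.
have rank_pred : ((rank V).-1 < rank V)%N by rewrite ltn_predL.
have above_sub : above V x (soa V x + b / 2) `<=` F by move=> f [/VF].
have below_sub : below V x (soa V x - b / 2) `<=` F by move=> f [/VF].
have [x1 h1] := (shatteredE _ above_sub).2 (leq_trans rank_pred keeps).
have [x2 h2] := (shatteredE _ below_sub).2 (leq_trans rank_pred below_full).
have : shattered V (rank V).
  by exists (fun y => if y is c :: y' then (if c then x1 y' else x2 y') else x);
    rewrite -(ltn_predK rank_pos); apply: shatters_join h1 h2.
by move/(shatteredE _ VF); rewrite ltnn.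
Qed.

Definition restrict (o : option bool) V x :=
  match o with
  | None => V
  | Some true => above V x (soa V x + b)
  | Some false => below V x (soa V x - b / 2)
  end.

Definition mistake_dir (f : X -> R) V x : option bool :=
  if soa V x + b <= f x then Some true
  else if f x <= soa V x - b then Some false else None.

Lemma restrict_mistake f V x c : V `<=` F -> V f -> (forall x, 0 <= f x <= 1) ->
  mistake_dir f V x = Some c ->
  restrict (Some c) V x f /\ (rank (restrict (Some c) V x) < rank V)%N.
Proof.
move=> VF Vf f01; have /andP[f0 f1] := f01 x; have := b_gt0; rewrite /mistake_dir.
case: ifP => [up b0 [<-]|_ b0].
  by split; [split | apply: rank_above_soa => //; lra].
case: ifP => // down [<-]; split; first by split => //; lra.
by apply: (rank_below_soa VF Vf); lra.
Qed.

Local Notation entry := ((X * R) * bool)%type.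
Local Notation hist := (history R X).

Definition f_run (f : X -> R) (h : hist) : set (X -> R) * seq (option bool) :=
  foldl (fun st e => let o := mistake_dir f st.1 e.1.1 in
    (restrict o st.1 e.1.1, rcons st.2 o)) (F, [::]) h.
Definition vspace f h := (f_run f h).1.
Definition mistakes f h := (f_run f h).2.

Lemma vspace_rcons f h e :
  vspace f (rcons h e) = restrict (mistake_dir f (vspace f h) e.1.1) (vspace f h) e.1.1.
Proof. by rewrite /vspace /f_run foldl_rcons. Qed.

Lemma mistakes_rcons f h e :
  mistakes f (rcons h e) = rcons (mistakes f h) (mistake_dir f (vspace f h) e.1.1).
Proof. by rewrite /mistakes /f_run foldl_rcons. Qed.

Lemma size_mistakes f h : size (mistakes f h) = size h.
Proof.
by elim/last_ind: h => [|h e IH] //; rewrite mistakes_rcons !size_rcons IH.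
Qed.

Section Target.
Variable f : X -> R.
Hypotheses (Ff : F f) (f01 : forall x, 0 <= f x <= 1).

Lemma vspace_invariant h : [/\ vspace f h f, vspace f h `<=` F &
  (count isSome (mistakes f h) + rank (vspace f h) <= rank F)%N].
Proof.
elim/last_ind: h => [|h e [Vf VF Hm]]; first by split.
rewrite vspace_rcons mistakes_rcons -cats1 count_cat /= addn0.
case hdir: (mistake_dir f (vspace f h) e.1.1) => [c|] /=; last by rewrite addn0.
have [Sf Srank] := restrict_mistake VF Vf f01 hdir.
split => //; first by move=> g; case: (c) => -[/VF].
by rewrite addn1 addSn; apply: leq_trans Hm; rewrite ltn_add2l.
Qed.

Lemma count_mistakes_le h : (count isSome (mistakes f h) <= d)%N.
Proof.
have [Vf VF Hm] := vspace_invariant h.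
have := rank_gt0 VF Vf; have := rank_lt (@subset_refl _ F); lia.
Qed.

End Target.

Variable n : nat.

(* An expert lists at most [d.+1] pairs (round, direction); since a target
   makes at most [d] mistakes, some expert predicts all of them. *)
Definition expert := {ffun 'I_d.+1 -> option ('I_n.+1 * bool)}.

Definition hits (D : expert) (t : nat) (c : bool) :=
  [exists j, if D j is Some p then (val p.1 == t) && (p.2 == c) else false].

Definition expert_dir (D : expert) (t : nat) : option bool :=
  if hits D t true then Some true else if hits D t false then Some false else None.

Definition agrees (D : expert) (s : seq (option bool)) :=
  forall k, (k < size s)%N -> expert_dir D k = nth None s k.

Lemma expert_dirE D t o : (forall c, hits D t c <-> o = Some c) -> expert_dir D t = o.
Proof.
move=> H; rewrite /expert_dir; case: o H => [c|] H.
- have := H c; case: c H => H [_ /(_ erefl) ->] //.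
  by case: ifP => // /H.
- by case: ifP => [/H|_] //; case: ifP => [/H|_].
Qed.

Lemma agrees_rcons D s o : agrees D (rcons s o) -> agrees D s /\ expert_dir D (size s) = o.
Proof.
move=> Ha; split; last by rewrite Ha ?size_rcons // nth_rcons ltnn eqxx.
by move=> k ks; rewrite Ha ?size_rcons 1?ltnW // nth_rcons ks.
Qed.

Lemma exists_agrees s : (size s <= n)%N -> (count isSome s <= d.+1)%N ->
  exists D, agrees D s.
Proof.
move=> sz cnt; pose ks := [seq k <- iota 0 (size s) | isSome (nth None s k)].
have size_ks : (size ks <= d.+1)%N.
  by rewrite size_filter -(count_map _ isSome) -/(mkseq _ _) mkseq_nth.
have ks_mem k : (k \in ks) = (k < size s)%N && isSome (nth None s k).
  by rewrite mem_filter mem_iota andbC.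
pose D : expert := [ffun j : 'I_d.+1 => if (j < size ks)%N then
  Some (inord (nth 0%N ks j), odflt false (nth None s (nth 0%N ks j))) else None].
exists D => k ks_lt; apply: expert_dirE => c; split.
- case/existsP => j; rewrite ffunE; case: ifP => // j_lt /andP[/eqP /= <-].
  have := mem_nth 0%N j_lt; rewrite ks_mem => /andP[k_lt].
  rewrite inordK; last by rewrite ltnS (leq_trans (ltnW k_lt)).
  by case: (nth None s _) => // c' _ /eqP <-.
- move=> sk; have k_mem : k \in ks by rewrite ks_mem ks_lt sk.
  have j_lt : (index k ks < d.+1)%N by apply: leq_trans size_ks; rewrite index_mem.
  apply/existsP; exists (Ordinal j_lt); rewrite ffunE /= index_mem k_mem nth_index //.
  by rewrite sk inordK ?eqxx // ltnS (leq_trans _ sz) // ltnW.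
Qed.

Definition expert_space (D : expert) (h : hist) :=
  (foldl (fun st e => (st.1.+1, restrict (expert_dir D st.1) st.2 e.1.1)) (0%N, F) h).2.

Lemma expert_space_rcons D h e :
  expert_space D (rcons h e) = restrict (expert_dir D (size h)) (expert_space D h) e.1.1.
Proof.
suff cnt : (foldl (fun st e => (st.1.+1, restrict (expert_dir D st.1) st.2 e.1.1))
   (0%N, F) h).1 = size h by rewrite /expert_space foldl_rcons /= cnt.
by elim/last_ind: h => [|h e' IH] //; rewrite foldl_rcons /= IH size_rcons.
Qed.

Lemma expert_space_vspace D f h : agrees D (mistakes f h) -> expert_space D h = vspace f h.
Proof.
elim/last_ind: h => [|h e IH] //; rewrite mistakes_rcons => /agrees_rcons [/IH Hs].
by rewrite size_mistakes expert_space_rcons vspace_rcons Hs => ->.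
Qed.

Variable eps : R.
Hypotheses (eps_gt0 : 0 < eps) (eps_le : 4 * eps <= 1).
Local Notation e0 := ((x0, 0, false) : entry).

Definition expert_pred D h x := eps + (1 - 2 * eps) * soa (expert_space D h) x.

Definition weight D (h : hist) := \prod_(k < size h)
  likelihood (expert_pred D (take k h) (nth e0 h k).1.1) (nth e0 h k).2.

Definition total_weight (h : hist) := \sum_(D : expert) weight D h.

Definition mixture h x := (\sum_(D : expert) weight D h * expert_pred D h x) / total_weight h.

Lemma weight_rcons D h e :
  weight D (rcons h e) = weight D h * likelihood (expert_pred D h e.1.1) e.2.
Proof.
rewrite /weight size_rcons big_ord_recr /= nth_rcons ltnn eqxx -cats1 take_size_cat //.
congr (_ * _); apply: eq_bigr => i _.
by rewrite takel_cat ?nth_cat ?ltn_ord // ltnW.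
Qed.

Lemma expert_pred_bounds D h x : eps <= expert_pred D h x <= 1 - eps.
Proof.
have /andP[s0 s1] := soa01 (expert_space D h) x.
have e2 : 0 <= 1 - 2 * eps by have := eps_gt0; have := eps_le; lra.
by rewrite /expert_pred; apply/andP; split; nra.
Qed.

Lemma likelihood_expert_gt0 D h (e : entry) : 0 < likelihood (expert_pred D h e.1.1) e.2.
Proof.
have /andP[+ _] := likelihood_bounds e.2 (expert_pred_bounds D h e.1.1).
by have := eps_gt0; lra.
Qed.

Lemma weight_gt0 D h : 0 < weight D h.
Proof. by apply: prodr_gt0 => i _; apply: likelihood_expert_gt0. Qed.

Lemma weight_le_total D h : weight D h <= total_weight h.
Proof.
rewrite /total_weight (bigD1 D) //= lerDl.
by apply: sumr_ge0 => D' _; apply/ltW/weight_gt0.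
Qed.

Lemma total_weight_gt0 h : 0 < total_weight h.
Proof. exact: lt_le_trans (weight_gt0 [ffun => None] h) (weight_le_total _ _). Qed.

Lemma mixture_bounds h x : eps <= mixture h x <= 1 - eps.
Proof.
have Sp := total_weight_gt0 h.
rewrite /mixture ler_pdivlMr // ler_pdivrMr // /total_weight !mulr_sumr.
apply/andP; split; apply: ler_sum => D _;
  have /andP[p0 p1] := expert_pred_bounds D h x; have := weight_gt0 D h; nra.
Qed.

Lemma likelihood_mixture h x yh y :
  likelihood (mixture h x) y = total_weight (rcons h (x, yh, y)) / total_weight h.
Proof.
have Sp := total_weight_gt0 h.
rewrite /total_weight; under eq_bigr => D _ do rewrite weight_rcons /=.
rewrite /likelihood /mixture -/(total_weight h); case: y => //.
apply: (@mulIf _ (total_weight h)); first by rewrite gt_eqF.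
rewrite mulrBl mul1r !divfK ?gt_eqF // /total_weight -sumrB.
by apply: eq_bigr => D _; rewrite mulrBr mulr1.
Qed.

(* The learner's loss telescopes along the normalisations of the weights. *)
Lemma learner_loss_mixture h : each_round (fun h1 e => e.1.2 = mixture h1 e.1.1) h ->
  learner_loss h = (ln (#|{: expert}|%:R) - ln (total_weight h))%:E.
Proof.
elim/last_ind: h => [_|h e IH /each_round_rcons [/IH hL he]].
  rewrite /learner_loss big_nil /total_weight.
  by under eq_bigr do rewrite /weight big_ord0; rewrite sumr_const subrr.
rewrite /learner_loss big_rcons /= -/(learner_loss h) hL.
case: e he => [[x yh] y] /= ->.
have := mixture_bounds h x; have := total_weight_gt0 h.
have := total_weight_gt0 (rcons h (x, mixture h x, y)) => Sp' Sp m01.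
rewrite logloss_likelihood; last by have := eps_gt0; lra.
rewrite (likelihood_mixture h x (mixture h x)) ln_div ?posrE // -EFinD; congr _%:E; lra.
Qed.

Hypothesis b_le_eps : b <= eps.

Lemma logloss_ge_expert_round D f h (e : entry) : (forall x, 0 <= f x <= 1) ->
  expert_space D h = vspace f h ->
  ((- ln (likelihood (expert_pred D h e.1.1) e.2) + ln (1 - 2 * eps)
    + ln eps * (isSome (mistake_dir f (vspace f h) e.1.1))%:R)%:E
   <= logloss (f e.1.1) e.2)%E.
Proof.
move=> f01 DE; rewrite /expert_pred DE.
have ln_le0' : ln (1 - 2 * eps) <= 0 by apply: ln_le0; have := eps_gt0; lra.
case hdir: mistake_dir => [c|] /=; rewrite ?mulr1 ?mulr0 ?addr0.
  have := expert_pred_bounds D h e.1.1; rewrite /expert_pred DE => hp.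
  apply: le_trans (logloss_ge_far e.2 eps_gt0 hp (f01 _)).
  by rewrite lee_fin; lra.
apply: logloss_ge_smoothed => //; first exact: soa01.
move: hdir; rewrite /mistake_dir; case: ifP => // /negbT; rewrite -ltNge => below.
case: ifP => // /negbT; rewrite -ltNge => above _.
by have := b_le_eps => ?; apply/andP; split; lra.
Qed.

Lemma cum_loss_ge_expert D f h : (forall x, 0 <= f x <= 1) -> agrees D (mistakes f h) ->
  ((- ln (weight D h) + ln (1 - 2 * eps) * (size h)%:R
    + ln eps * (count isSome (mistakes f h))%:R)%:E <= cum_loss f h)%E.
Proof.
move=> f01; elim/last_ind: h => [|h e IH].
  by rewrite /weight /cum_loss big_ord0 big_nil ln1 /mistakes /= !mulr0 !addr0 oppr0.
rewrite mistakes_rcons => /agrees_rcons [Ha _].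
rewrite weight_rcons /cum_loss big_rcons /= -/(cum_loss f h) size_rcons.
rewrite -cats1 count_cat /= addn0 lnM ?posrE ?weight_gt0 ?likelihood_expert_gt0 //.
apply: le_trans (leeD (IH Ha) (logloss_ge_expert_round e f01 (expert_space_vspace Ha))).
by rewrite -EFinD lee_fin !natrD -natr1; lra.
Qed.

Hypothesis F01 : forall f, F f -> forall x, 0 <= f x <= 1.

Lemma regret_mixture_le h : size h = n ->
  each_round (fun h1 e => e.1.2 = mixture h1 e.1.1) h ->
  (regret F h <= (ln (#|{: expert}|%:R) - ln (1 - 2 * eps) * n%:R - ln eps * d%:R)%:E)%E.
Proof.
move=> sz hh; apply: regret_le; first exact: learner_loss_mixture.
move=> f Ff; have [D HD] : exists D, agrees D (mistakes f h).
  apply: exists_agrees; first by rewrite size_mistakes sz.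
  exact: leq_trans (count_mistakes_le Ff (F01 Ff) h) _.
apply: le_trans (cum_loss_ge_expert (F01 Ff) HD); rewrite lee_fin sz.
have : ln (weight D h) <= ln (total_weight h).
  by rewrite ler_ln ?posrE ?weight_gt0 ?total_weight_gt0 // weight_le_total.
have : (count isSome (mistakes f h))%:R <= d%:R :> R.
  by rewrite ler_nat (count_mistakes_le Ff (F01 Ff)).
have : ln eps <= 0 by apply: ln_le0; have := eps_gt0; have := eps_le; lra.
nra.
Qed.

Lemma minimax_regret_le_mixture :
  (minimax_regret F n <= (ln (#|{: expert}|%:R) - ln (1 - 2 * eps) * n%:R - ln eps * d%:R)%:E)%E.
Proof.
apply: (@game_value_le_strategy _ _ _ mixture).
- by move=> h x; have := mixture_bounds h x; have := eps_gt0; lra.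
- exact: each_round_nil.
- exact: regret_mixture_le.
Qed.

End VersionSpace.

Lemma card_expert d n : #|{: expert d n}| = ((n.+1 * 2).+1 ^ d.+1)%N.
Proof. by rewrite card_ffun card_option card_prod !card_ord card_bool. Qed.

Lemma minimax_regret_le (R : realType) (X : Type) (F : set (X -> R)) (x0 : X)
    (K d n : nat) (eps : R) :
  (forall f, F f -> forall x, 0 <= f x <= 1) -> (0 < K)%N ->
  (forall m x, shatters F (2 / K%:R) m x -> (m <= d)%N) ->
  0 < eps -> 4 * eps <= 1 -> 2 / K%:R <= eps ->
  (minimax_regret F n <= ((d.+1)%:R * ln (2 * n%:R + 3) - ln (1 - 2 * eps) * n%:R
                          - ln eps * d%:R)%:E)%E.
Proof.
move=> F01 K0 Fd eps0 eps1 b_eps.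
apply: le_trans (minimax_regret_le_mixture x0 K0 Fd n eps0 eps1 b_eps F01) _.
rewrite lee_fin card_expert natrX lnXn ?ltr0n // [d.+1%:R * _]mulr_natl.
have -> : ((n.+1 * 2).+1 = 2 * n + 3)%N by lia.
by rewrite natrD natrM.
Qed.

Lemma eventually_ln_le_linear (R : realType) (A B eta : R) : 0 <= A -> 0 < eta ->
  exists N, forall n, (N <= n)%N -> A * ln (2 * n%:R + 3) + B <= eta * n%:R.
Proof.
(* [ln x < x / c + ln c], with [c] chosen so that [A / c <= eta / 4] *)
move=> A0 eta0; pose c := 4 * A / eta + 1.
have c1 : 1 <= c by rewrite lerDr divr_ge0 ?mulr_ge0 // ltW.
have Ac : A / c <= eta / 4.
  rewrite ler_pdivrMr ?(lt_le_trans ltr01) //.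
  have -> : eta / 4 * c = A + eta / 4 by rewrite /c; field; rewrite gt_eqF.
  lra.
have lnc0 : 0 <= ln c by apply: ln_ge0.
pose T := (3 * eta / 4 + A * ln c + B) * 2 / eta.
exists (Num.Def.archi_bound `|T|) => n Nn.
have nT : T <= n%:R.
  apply/ltW/(le_lt_trans (ler_norm T))/(lt_le_trans (archi_boundP (normr_ge0 T))).
  by rewrite ler_nat.
have hln : ln (2 * n%:R + 3) <= (2 * n%:R + 3) / c + ln c.
  have x0 : 0 < (2 * n%:R + 3) / c by rewrite divr_gt0 //; lra.
  have := ln_sublinear x0; rewrite ln_div ?posrE //; lra.
have : A * ln (2 * n%:R + 3) <= A / c * (2 * n%:R + 3) + A * ln c.
  by rewrite mulrAC -mulrA -mulrDr ler_wpM2l.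
have : A / c * (2 * n%:R + 3) <= eta / 4 * (2 * n%:R + 3) by rewrite ler_wpM2r //; lra.
have : 3 * eta / 4 + A * ln c + B <= eta * n%:R / 2.
  by move: nT; rewrite /T ler_pdivrMr // => ?; lra.
lra.
Qed.

Lemma ratio_cvg0 (R : realType) (u : nat -> \bar R) : (forall n, (0 <= u n)%E) ->
  (forall eta : R, 0 < eta -> exists N, forall n, (N <= n)%N -> (u n <= (eta * n%:R)%:E)%E) ->
  ((fun n => ((n%:R)^-1)%:E * u n)%E @ \oo --> 0%:E).
Proof.
move=> u0 ub; apply/fine_cvgP; split.
  have [N HN] := ub 1 ltr01; exists N => // n /= /HN.
  by have := u0 n; case: (u n) => [r| |] //= _ _; rewrite -EFinM.
apply/cvgrPdist_le => eta eta0; have [N HN] := ub eta eta0.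
exists N.+1 => // n /= Nn; have n0 : 0 < n%:R :> R by rewrite ltr0n (leq_ltn_trans _ Nn).
have := HN n (ltnW Nn); have := u0 n; case: (u n) => [r| |] //=; rewrite !lee_fin => r0 rle.
rewrite sub0r normrN ger0_norm ?mulr_ge0 ?invr_ge0 ?ler0n //.
by rewrite mulrC ler_pdivrMr // mulrC.
Qed.

Lemma ratio_cvg0_not_linear (R : realType) (u : nat -> \bar R) (c : R) : 0 < c ->
  ((fun n => ((n%:R)^-1)%:E * u n)%E @ \oo --> 0%:E) ->
  ~ (forall n, ((n%:R * c)%:E <= u n)%E).
Proof.
move=> c0 /fine_cvgP [fin cv] lb.
suff : c <= lim ((fine \o (fun n => ((n%:R)^-1)%:E * u n)%E) n @[n --> \oo]).
  by rewrite (cvg_lim _ cv) //; lra.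
apply: limr_ge; first by apply/cvg_ex; exists 0.
near=> n; have n0 : 0 < n%:R :> R by rewrite ltr0n; near: n; exists 1%N.
have : ((n%:R^-1)%:E * u n)%E \is a fin_num by near: n.
rewrite /=; have := lb n; case: (u n) => [r| |] //=.
  by rewrite lee_fin => nr _; rewrite mulrC ler_pdivlMr // mulrC.
by move=> _; rewrite mulry gtr0_sg ?invr_gt0 // mul1e.
Unshelve. all: by end_near.
Qed.

Lemma minimax_regret_sublinear (R : realType) (X : Type) (F : set (X -> R)) (x0 : X) :
  (forall f, F f -> forall x, 0 <= f x <= 1) ->
  (forall beta : R, 0 < beta -> (seq_fat F beta < +oo)%E) ->
  forall eta : R, 0 < eta ->
  exists N, forall n, (N <= n)%N -> (minimax_regret F n <= (eta * n%:R)%:E)%E.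
Proof.
move=> F01 fat_fin eta eta0.
have e0 : 0 < expR (- (eta / 2)) := expR_gt0 _.
have e1 : expR (- (eta / 2)) < 1 by rewrite expR_lt1; lra.
(* chosen so that the smoothing costs at most [eta / 2] per round *)
pose eps := (1 - expR (- (eta / 2))) / 4.
have eps0 : 0 < eps by rewrite /eps; lra.
have eps1 : 4 * eps <= 1 by rewrite /eps; lra.
have smoothing_cost : - ln (1 - 2 * eps) <= eta / 2.
  have : ln (expR (- (eta / 2))) <= ln (1 - 2 * eps) by rewrite ler_ln ?posrE /eps; lra.
  by rewrite expRK; lra.
pose K := Num.Def.archi_bound (2 / eps).
have K_gt : 2 / eps < K%:R by apply/archi_boundP/ltW/divr_gt0.
have K_pos : 0 < K%:R :> R by apply: lt_trans K_gt; apply: divr_gt0.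
have K0 : (0 < K)%N by rewrite -(ltr0n R).
have b_eps : 2 / K%:R <= eps.
  by rewrite ler_pdivrMr // mulrC -ler_pdivrMr //; apply: ltW.
have [d Fd] := seq_fat_lt_bounded (fat_fin _ (divr_gt0 (ltr0Sn R 1) K_pos)).
have [N HN] := eventually_ln_le_linear (- ln eps * d%:R) (ler0n R d.+1) (divr_gt0 eta0 (ltr0Sn R 1)).
exists N => n /HN Nn; apply: le_trans (minimax_regret_le x0 n F01 K0 Fd eps0 eps1 b_eps) _.
have : - ln (1 - 2 * eps) * n%:R <= eta / 2 * n%:R by apply: ler_wpM2r.
by rewrite lee_fin; lra.
Qed.

Lemma sublinear_seq_fat_lt (R : realType) (X : Type) (F : set (X -> R)) :
  (forall f, F f -> forall x, 0 <= f x <= 1) ->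
  ((fun n : nat => ((n%:R)^-1)%:E * minimax_regret F n)%E @ \oo --> 0%:E) ->
  forall beta : R, 0 < beta -> (seq_fat F beta < +oo)%E.
Proof.
move=> F01 cvg0 beta beta0; apply: contrapT => /seq_fat_not_lt_shatters shat.
apply: (ratio_cvg0_not_linear (c := ln (1 + beta / 2)) _ cvg0) => [|n].
  by apply: ln_gt0; lra.
by have [x /(minimax_regret_ge_shatters F01 (ltW beta0))] := shat n.
Qed.

Unset Implicit Arguments.

Theorem theorem3 (R : realType) (X : Type) (F : set (X -> R))
  (hX : inhabited X) (hF : F !=set0)
  (hF01 : forall f, F f -> forall x, 0 <= f x <= 1) :
  ((fun n : nat => ((n%:R)^-1)%:E * minimax_regret F n)%E @ \oo --> 0%:E)
  <-> (forall beta : R, 0 < beta -> (seq_fat F beta < +oo)%E).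
Proof.
split; first exact: sublinear_seq_fat_lt.
move=> fat_fin; have [x0] := hX.
apply: ratio_cvg0 => [n|]; first exact: minimax_regret_ge0.
exact: minimax_regret_sublinear x0 hF01 fat_fin.
Qed.
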